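(* Let $k\ge 2$ and $G=\Theta(2,2,2k)$ with end vertices $u$ and $v$. Let $L$ be a $3$-assignment for $G$ such that $L(u)\ne L(v)$. Then $P(G,L)\ge P(G,3)$.
   Context: $\Theta(l_1,l_2,l_3)$ denotes two end vertices joined by three internally disjoint paths of lengths $l_1,l_2,l_3$. A $3$-assignment $L$ assigns to each vertex $w$ a set $L(w)$ of $3$ colors; $P(G,L)$ is the number of proper colorings $f$ of $G$ with $f(w)\in L(w)$ for all $w$. $P(G,3)$ is the number of proper colorings of $G$ with colors from $\{1,2,3\}$. *)

From mathcomp Require Import all_boot.
Set Implicit Arguments. Unset Strict Implicit. Unset Printing Implicit Defensive.

(* Theta graph Theta(l1,l2,l3), for l1,l2,l3 >= 1, on vertex set
   {0, ..., l1+l2+l3-2}: vertex 0 is the end vertex u, vertex 1 is the end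
   vertex v; the l1-1 internal vertices of the first path are 2, ..., l1,
   those of the second path are l1+1, ..., l1+l2-1, those of the third path
   are l1+l2, ..., l1+l2+l3-2 (each path traverses its internal vertices in
   increasing order from u to v). *)

Definition path_vs (s l : nat) : seq nat := 0 :: rcons (iota s l.-1) 1.
Definition consec (s : seq nat) : seq (nat * nat) := zip s (behead s).

Definition theta_edges (l1 l2 l3 : nat) : seq (nat * nat) :=
  consec (path_vs 2 l1) ++ consec (path_vs l1.+1 l2) ++
  consec (path_vs (l1 + l2) l3).

Definition theta_adj (l1 l2 l3 : nat) : rel nat :=
  fun x y => ((x, y) \in theta_edges l1 l2 l3) || ((y, x) \in theta_edges l1 l2 l3).

(* vertex type: (l1+l2+l3-3)+2 = l1+l2+l3-1 vertices when all li >= 1 *)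
Definition theta_V (l1 l2 l3 : nat) : finType := 'I_(l1 + l2 + l3 - 3).+2.

Definition theta_u (l1 l2 l3 : nat) : theta_V l1 l2 l3 := @Ordinal (l1 + l2 + l3 - 3).+2 0 isT.
Definition theta_v (l1 l2 l3 : nat) : theta_V l1 l2 l3 := @Ordinal (l1 + l2 + l3 - 3).+2 1 isT.

Definition theta_proper (l1 l2 l3 : nat) (C : eqType)
  (f : theta_V l1 l2 l3 -> C) : bool :=
  [forall x : theta_V l1 l2 l3, forall y : theta_V l1 l2 l3,
     theta_adj l1 l2 l3 (val x) (val y) ==> (f x != f y)].

Definition theta_Plist (l1 l2 l3 : nat) (C : finType)
  (L : theta_V l1 l2 l3 -> {set C}) : nat :=
  #|[set f : {ffun theta_V l1 l2 l3 -> C} |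
      theta_proper f && [forall x, f x \in L x]]|.

Definition theta_P3 (l1 l2 l3 : nat) : nat :=
  #|[set f : {ffun theta_V l1 l2 l3 -> 'I_3} | theta_proper f]|.

Example theta_sanity : theta_edges 2 2 4 =
  [:: (0,2); (2,1); (0,3); (3,1); (0,4); (4,5); (5,6); (6,1)].
Proof. by []. Qed.

From mathcomp Require Import all_boot zify.
Set Implicit Arguments. Unset Strict Implicit. Unset Printing Implicit Defensive.

(* Colour the end vertices u and v first, with c0 and c1.  The middle vertices
   a and b of the two paths of length 2 then have #|L a :\ c0 :\ c1| and
   #|L b :\ c0 :\ c1| choices, and the long path contributes the number of
   colourings of its 2k-1 internal vertices with the ends precoloured c0, c1.
   Along a path, this count is obtained by iterating y |-> sum_(x in L w, x != y);
   two invariants of this map show that with 3-lists the count is always at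
   least alpha k = (4^k - 1)/3, while with the palette {1,2,3} it is exactly
   alpha k + [c0 == c1].  Hence P(G,3) = 18 alpha k + 12.  On the other hand
   the weights #|L a :\ c0 :\ c1| * #|L b :\ c0 :\ c1| count the colourings
   of the 4-cycle u a v b, and there are at least 21 of them when
   L u != L v, so P(G,L) >= 21 alpha k, which is enough since alpha k >= 5. *)

Section Sums.
Variable T : finType.
Implicit Types (A : {pred T}) (F : T -> nat).

Lemma sum_mulb_mem A F : \sum_(x in A) F x = \sum_x (x \in A) * F x.
Proof. by rewrite big_mkcond; apply: eq_bigr => x _; case: (x \in A); rewrite ?mul1n. Qed.

Lemma sum_setT F : \sum_(x in [set: T]) F x = \sum_x F x.
Proof. by apply: eq_bigl => x; rewrite in_setT. Qed.

Lemma sum_mem A (b : T -> bool) : \sum_(x in A) b x = #|[pred x in A | b x]|.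
Proof.
rewrite -sum1_card big_mkcond [RHS]big_mkcond /=.
by apply: eq_bigr => x _; rewrite !inE; case: (x \in A); case: (b x).
Qed.

Lemma sum_eq_mem A (x : T) : \sum_(y in A) (x == y) = (x \in A).
Proof.
have [xA|xNA] := boolP (x \in A).
  by rewrite (bigD1 x) //= eqxx big1 // => y /andP[_ yx]; rewrite eq_sym (negbTE yx).
by rewrite big1 // => y yA; case: eqP => // xy; rewrite xy yA in xNA.
Qed.

Lemma sum_eqb (c : T) (G : bool -> nat) :
  \sum_x G (c == x) = G true + #|T|.-1 * G false.
Proof.
rewrite (bigD1 c) //= eqxx (eq_bigr (fun=> G false)) ?sum_nat_const ?cardC1 //.
by move=> x; rewrite eq_sym => /negbTE ->.
Qed.

End Sums.

Lemma sum3_mulb (T1 T2 T3 : finType) (A : {pred T1}) (B : {pred T2}) (P : pred T3) :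
  \sum_x \sum_y \sum_z [&& x \in A, y \in B & P z] = #|A| * #|B| * \sum_z P z.
Proof.
rewrite -mulnA -sum_nat_const sum_mulb_mem; apply: eq_bigr => x _.
rewrite -sum_nat_const sum_mulb_mem big_distrr; apply: eq_bigr => y _.
by rewrite !big_distrr /=; apply: eq_bigr => z _; rewrite !mulnb.
Qed.

Section TupleSums.
Variables (C : finType) (F : seq C -> nat).

Lemma sum_tuple0 : \sum_(t : 0.-tuple C) F t = F [::].
Proof.
rewrite (eq_bigr (fun=> F [::])) => [|t _]; last by rewrite tuple0.
by rewrite sum_nat_const card_tuple mul1n.
Qed.

Lemma sum_tuple_cons n :
  \sum_(t : n.+1.-tuple C) F t = \sum_(x : C) \sum_(t : n.-tuple C) F (x :: t).
Proof.
rewrite pair_big (reindex (fun p : C * n.-tuple C => [tuple of p.1 :: p.2])) //=.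
exists (fun t : n.+1.-tuple C => (thead t, [tuple of behead t])) => [[x t] _|t _].
  by congr pair; apply: val_inj.
by rewrite [in RHS](tuple_eta t).
Qed.

End TupleSums.

Lemma card_ffun_tuple (C : finType) n (P : pred {ffun 'I_n -> C}) :
  #|[set f | P f]| = \sum_(t : n.-tuple C) P [ffun i => tnth t i].
Proof.
rewrite -sum1dep_card big_mkcond /=.
rewrite (reindex (fun t : n.-tuple C => [ffun i => tnth t i])) /=.
  by apply: eq_bigr => t _; case: (P _).
exists (fun f : {ffun 'I_n -> C} => [tuple f i | i < n]) => [t _|f _].
  by apply: eq_from_tnth => i; rewrite tnth_mktuple ffunE.
by apply/ffunP => i; rewrite ffunE tnth_mktuple.
Qed.

Section PathCount.
Variable C : finType.
Implicit Types (A : {set C}) (f : C -> nat) (Lf : nat -> {set C}).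

Definition avoid_sum A f (y : C) : nat := \sum_(x in A | x != y) f x.

Lemma eq_avoid_sum A f g : f =1 g -> avoid_sum A f =1 avoid_sum A g.
Proof. by move=> fg y; apply: eq_bigr => x _; apply: fg. Qed.

Fixpoint path_count Lf (s m : nat) (c d : C) : nat :=
  if m is m'.+1 then avoid_sum (Lf s) (fun x => path_count Lf s.+1 m' x d) c
  else c != d.

Definition path_coloring (x0 : C) Lf (s m : nat) (c d : C) (r : seq C) : bool :=
  path (fun a b => a != b) c (rcons r d) &&
  all (fun i => nth x0 r i \in Lf (s + i)) (iota 0 m).

Lemma path_coloring_cons x0 Lf s m c d x r :
  path_coloring x0 Lf s m.+1 c d (x :: r) =
  [&& x \in Lf s, x != c & path_coloring x0 Lf s.+1 m x d r].
Proof.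
rewrite /path_coloring /= addn0 eq_sym -add1n iotaDl all_map.
have -> : all (preim (addn 1) (fun i => nth x0 (x :: r) i \in Lf (s + i))) (iota 0 m)
        = all (fun i => nth x0 r i \in Lf (s.+1 + i)) (iota 0 m).
  by apply: eq_all => i; rewrite /= add1n addSnnS.
by case: (x != c); case: (x \in Lf s); rewrite ?andbF.
Qed.

Lemma path_countE x0 Lf m : forall s c d,
  \sum_(t : m.-tuple C) path_coloring x0 Lf s m c d t = path_count Lf s m c d.
Proof.
elim: m => [|m IH] s c d.
  by rewrite (sum_tuple0 (path_coloring x0 Lf s 0 c d)) /path_coloring /= !andbT.
rewrite (sum_tuple_cons (path_coloring x0 Lf s m.+1 c d)) /= /avoid_sum.
rewrite big_mkcondr [RHS]big_mkcond /=.
apply: eq_bigr => x _; rewrite -IH.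
under eq_bigr do rewrite path_coloring_cons.
by case: (x \in Lf s); case: (x != c); rewrite //= big1.
Qed.

Lemma cards3P A : #|A| = 3 ->
  exists a b c, [/\ a != b, a != c, b != c & A = [set a; b; c]].
Proof.
move=> A3; have /card_gt2P[a [b [c [[aA bA cA] [ab bc ca]]]]] : 2 < #|A| by rewrite A3.
exists a, b, c; split; rewrite // 1?eq_sym //.
apply/esym/eqP; rewrite eqEcard A3 -setUA !cardsU1 cards1 !inE negb_or ab bc eq_sym ca.
by rewrite /= andbT; apply/subsetP => x; rewrite !inE => /or3P[] /eqP->.
Qed.

Lemma avoid_sum3 a b c f y : a != b -> a != c -> b != c ->
  avoid_sum [set a; b; c] f y = (a != y) * f a + (b != y) * f b + (c != y) * f c.
Proof.
move=> ab ac bc; rewrite /avoid_sum big_mkcondr /= -setUA.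
rewrite big_setU1 /=; last by rewrite !inE negb_or ab ac.
by rewrite big_setU1 ?inE //= big_set1 addnA !mulnbl.
Qed.

(* With the palette {1,2,3} the counts for paths with 2j+1 and 2j internal
   vertices are alpha + [y == d] and 2 alpha + [y != d]: these invariants are the
   inequalities satisfied by such functions, and avoid_sum preserves them for
   arbitrary 3-lists. *)
Definition odd_inv (a : nat) f :=
  (forall y, a <= f y) /\
  (forall y1 y2 y3, y1 != y2 -> y1 != y3 -> y2 != y3 -> 3 * a + 1 <= f y1 + f y2 + f y3).

Definition even_inv (a : nat) f :=
  (forall y1 y2, y1 != y2 -> 4 * a + 1 <= f y1 + f y2) /\
  (forall y1 y2 y3, y1 != y2 -> y1 != y3 -> y2 != y3 -> 6 * a + 2 <= f y1 + f y2 + f y3).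

Ltac case_eqs :=
  repeat match goal with
  | H : is_true (?x != ?x) |- _ => by rewrite eqxx in H
  | H : ?x <> ?x |- _ => by case: H
  | |- context [?x == ?x] => rewrite eqxx
  | |- context [?x == ?y] => case: (x =P y) => [?|?]; subst
  end.

Lemma odd_inv_avoid_sum a A f : #|A| = 3 -> odd_inv a f -> even_inv a (avoid_sum A f).
Proof.
case/cards3P => x1 [x2 [x3 [x12 x13 x23 ->]]] [f_ge f_sum3].
have := f_sum3 _ _ _ x12 x13 x23; have := f_ge x1; have := f_ge x2; have := f_ge x3.
split=> [y1 y2|y1 y2 y3] *; rewrite !avoid_sum3 //; case_eqs; lia.
Qed.

Lemma even_inv_avoid_sum a A f :
  #|A| = 3 -> even_inv a f -> odd_inv (4 * a + 1) (avoid_sum A f).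
Proof.
case/cards3P => x1 [x2 [x3 [x12 x13 x23 ->]]] [f_sum2 f_sum3].
have := f_sum3 _ _ _ x12 x13 x23.
have := f_sum2 _ _ x12; have := f_sum2 _ _ x13; have := f_sum2 _ _ x23.
split=> [y|y1 y2 y3] *; rewrite !avoid_sum3 //; case_eqs; lia.
Qed.

Lemma even_inv_neq d : even_inv 0 (fun y => y != d).
Proof. by split=> [y1 y2|y1 y2 y3] *; case_eqs. Qed.

Fixpoint alpha (j : nat) : nat := if j is j'.+1 then 4 * alpha j' + 1 else 0.

Lemma path_count_inv Lf d : (forall i, #|Lf i| = 3) -> forall j s,
  even_inv (alpha j) (path_count Lf s (2 * j) ^~ d) /\
  odd_inv (alpha j.+1) (path_count Lf s (2 * j).+1 ^~ d).
Proof.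
move=> Lf3; elim=> [|j IH] s.
  have even0 s' : even_inv (alpha 0) (path_count Lf s' (2 * 0) ^~ d) := even_inv_neq d.
  by split; [apply: even0 | apply: even_inv_avoid_sum (even0 s.+1)].
have even_j1 s' : even_inv (alpha j.+1) (path_count Lf s' (2 * j.+1) ^~ d).
  by rewrite mulnS; apply: odd_inv_avoid_sum (proj2 (IH s'.+1)).
by split; [apply: even_j1 | apply: even_inv_avoid_sum (even_j1 s.+1)].
Qed.

Lemma path_count_odd_ge Lf j s c d : (forall i, #|Lf i| = 3) ->
  alpha j.+1 <= path_count Lf s (2 * j).+1 c d.
Proof. by move=> Lf3; case: (path_count_inv d Lf3 j s) => _ []. Qed.

End PathCount.

Lemma avoid_sum_setT (T : finType) (f : T -> nat) y :
  avoid_sum [set: T] f y + f y = \sum_x f x.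
Proof.
rewrite /avoid_sum [RHS](bigD1 y) //= addnC; congr (_ + _).
by apply: eq_bigl => x; rewrite in_setT.
Qed.

Lemma avoid_sum_I3_neq a (d y : 'I_3) :
  avoid_sum [set: 'I_3] (fun x => 2 * a + (x != d)) y = 4 * a + 1 + (y == d).
Proof.
apply: (@addIn (2 * a + (y != d))); rewrite avoid_sum_setT.
under eq_bigr do rewrite eq_sym.
rewrite big_split sum_nat_const (sum_eqb d (fun b => nat_of_bool (~~ b))) card_ord /=.
by case: (y == d); lia.
Qed.

Lemma avoid_sum_I3_eq a (d y : 'I_3) :
  avoid_sum [set: 'I_3] (fun x => a + (x == d)) y = 2 * a + (y != d).
Proof.
apply: (@addIn (a + (y == d))); rewrite avoid_sum_setT.
under eq_bigr do rewrite eq_sym.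
rewrite big_split sum_nat_const (sum_eqb d (fun b => nat_of_bool b)) card_ord /=.
by case: (y == d); lia.
Qed.

Lemma path_count_I3 (d : 'I_3) j s y :
  path_count (fun=> [set: 'I_3]) s (2 * j).+1 y d = alpha j.+1 + (y == d).
Proof.
elim: j s y => [|j IH] s y; first exact: avoid_sum_I3_neq 0 d y.
have even_j1 s' x :
    path_count (fun=> [set: 'I_3]) s' (2 * j).+2 x d = 2 * alpha j.+1 + (x != d).
  by rewrite -avoid_sum_I3_eq; apply: eq_avoid_sum => x'; apply: IH.
rewrite mulnS add2n -avoid_sum_I3_neq; apply: eq_avoid_sum => x; apply: even_j1.
Qed.

Section FourCycle.
Variable C : finType.
Implicit Types (A B Lu Lv : {set C}) (x y : C).

Lemma sum_neq_cardsD1 B x : \sum_(z in B) (x != z) = #|B :\ x|.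
Proof. by rewrite sum_mem; apply: eq_card => z; rewrite !inE eq_sym andbC. Qed.

Lemma cardsD2E A x y : #|A :\ x :\ y| = \sum_(z in A) ((z != x) && (z != y)).
Proof.
rewrite sum_mem; apply: eq_card => z; rewrite !inE.
by case: (z \in A); case: (z != x); case: (z != y).
Qed.

Lemma cardsD2_ge A x y : #|A| = 3 -> 1 + (x == y) <= #|A :\ x :\ y|.
Proof.
move=> A3; have := cardsD1 x A; have := cardsD1 y (A :\ x).
rewrite A3 !inE [y == x]eq_sym.
by case: (x == y) => /=; case: (x \in A); case: (y \in A); lia.
Qed.

Lemma sum_eq_cardsI Lu Lv : \sum_(x in Lu) \sum_(y in Lv) (x == y) = #|Lu :&: Lv|.
Proof.
under eq_bigr do rewrite sum_eq_mem.
by rewrite sum_mem; apply: eq_card => x; rewrite !inE.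
Qed.

Lemma cardsI_ltn n A B : #|A| = n -> #|B| = n -> A != B -> #|A :&: B| < n.
Proof.
move=> An Bn; apply: contraNT; rewrite -leqNgt => le_nI.
have /eqP <- : A :&: B == A by rewrite eqEcard subsetIl An.
by have /eqP -> : A :&: B == B by rewrite eqEcard subsetIr Bn.
Qed.

Lemma sum_cardsD2E Lu Lv A : \sum_(x in Lu) \sum_(y in Lv) #|A :\ x :\ y| =
  \sum_(z in A) #|Lu :\ z| * #|Lv :\ z|.
Proof.
under eq_bigr do under eq_bigr do rewrite cardsD2E.
under eq_bigr do rewrite exchange_big /=.
rewrite exchange_big /=; apply: eq_bigr => z _.
rewrite -!sum_neq_cardsD1 big_distrl /=; apply: eq_bigr => x _.
by rewrite big_distrr /=; apply: eq_bigr => y _; rewrite mulnb.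
Qed.

Lemma sum_cardsD2_ge Lu Lv A : #|Lu| = 3 -> #|Lv| = 3 -> #|A| = 3 ->
  18 <= \sum_(x in Lu) \sum_(y in Lv) #|A :\ x :\ y| + 2 * #|Lu :&: Lv|.
Proof.
move=> Lu3 Lv3 A3; rewrite sum_cardsD2E.
have common_le : \sum_(z in A) (z \in Lu :&: Lv) <= #|Lu :&: Lv|.
  by rewrite sum_mem; apply: subset_leq_card; apply/subsetP => z /andP[].
have term_ge z : 6 <= #|Lu :\ z| * #|Lv :\ z| + 2 * (z \in Lu :&: Lv).
  have := cardsD1 z Lu; have := cardsD1 z Lv; rewrite Lu3 Lv3 inE.
  by case: (z \in Lu); case: (z \in Lv) => /=; lia.
have : \sum_(z in A) 6 <= \sum_(z in A) (#|Lu :\ z| * #|Lv :\ z| + 2 * (z \in Lu :&: Lv)).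
  by apply: leq_sum => z _; apply: term_ge.
rewrite big_split -big_distrr /= sum_nat_const A3; lia.
Qed.

(* The sum counts the colourings of the 4-cycle u a v b. *)
Lemma four_cycle_count_ge Lu Lv A B :
  #|Lu| = 3 -> #|Lv| = 3 -> #|A| = 3 -> #|B| = 3 -> Lu != Lv ->
  21 <= \sum_(x in Lu) \sum_(y in Lv) #|A :\ x :\ y| * #|B :\ x :\ y|.
Proof.
move=> Lu3 Lv3 A3 B3 LuLv.
have sum2D (F G : C -> C -> nat) : \sum_(x in Lu) \sum_(y in Lv) (F x y + G x y) =
    \sum_(x in Lu) \sum_(y in Lv) F x y + \sum_(x in Lu) \sum_(y in Lv) G x y.
  by rewrite -big_split; apply: eq_bigr => x _; rewrite big_split.
have sum2_1 : \sum_(x in Lu) \sum_(y in Lv) 1 = 9.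
  by under eq_bigr do rewrite sum_nat_const Lv3; rewrite sum_nat_const Lu3.
have term_ge x y :
    #|A :\ x :\ y| + #|B :\ x :\ y| + (x == y) <= #|A :\ x :\ y| * #|B :\ x :\ y| + 1.
  by have := cardsD2_ge x y A3; have := cardsD2_ge x y B3; case: (x == y) => /=; nia.
have : \sum_(x in Lu) \sum_(y in Lv) (#|A :\ x :\ y| + #|B :\ x :\ y| + (x == y)) <=
       \sum_(x in Lu) \sum_(y in Lv) (#|A :\ x :\ y| * #|B :\ x :\ y| + 1).
  by apply: leq_sum => x _; apply: leq_sum => y _; apply: term_ge.
rewrite !sum2D sum2_1 sum_eq_cardsI.
have := sum_cardsD2_ge Lu3 Lv3 A3; have := sum_cardsD2_ge Lu3 Lv3 B3.
have := cardsI_ltn Lu3 Lv3 LuLv; lia.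
Qed.

End FourCycle.

Lemma all_zip (T : Type) (P : pred T) (s t : seq T) :
  all P s -> all P t -> all (fun p => P p.1 && P p.2) (zip s t).
Proof.
elim: s t => [|x s IH] [|y t] //= /andP[Px Ps] /andP[Py Pt].
by rewrite Px Py IH.
Qed.

Section ThetaDecomposition.
Variables (C : finType) (x0 : C).

Lemma all_zip_path (g : nat -> C) x s :
  all (fun p => g p.1 != g p.2) (zip (x :: s) s) = path (fun a b => a != b) (g x) (map g s).
Proof. by elim: s x => [|y s IH] x //=; rewrite IH. Qed.

Lemma forall_proper_edgesE n (E : seq (nat * nat)) (t : seq C) (f : 'I_n -> C) :
  (forall i, f i = nth x0 t i) -> all (fun p => (p.1 < n) && (p.2 < n)) E ->
  [forall x : 'I_n, forall y : 'I_n,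
     ((val x, val y) \in E) || ((val y, val x) \in E) ==> (f x != f y)] =
  all (fun p => nth x0 t p.1 != nth x0 t p.2) E.
Proof.
move=> tE E_bound; apply/forallP/allP => [proper_f [a b] abE|proper_t x].
  have /andP[a_lt b_lt] := allP E_bound _ abE.
  by have := forallP (proper_f (Ordinal a_lt)) (Ordinal b_lt); rewrite /= abE !tE.
apply/forallP => y; apply/implyP; rewrite !tE.
by case/orP => /proper_t //=; rewrite eq_sym.
Qed.

Lemma forall_in_listsE n (L : 'I_n.+1 -> {set C}) (t : seq C) (f : 'I_n.+1 -> C) :
  (forall i, f i = nth x0 t i) ->
  [forall x, f x \in L x] = all (fun i => nth x0 t i \in L (inord i)) (iota 0 n.+1).
Proof.
move=> tE; apply/forallP/allP => [in_f i|in_t x].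
  rewrite mem_iota add0n => i_lt; have := in_f (Ordinal i_lt).
  by rewrite tE (_ : inord i = Ordinal i_lt) //; apply: val_inj; rewrite /= inordK.
by rewrite tE -[x in L x]inord_val; apply: in_t; rewrite mem_iota add0n ltn_ord.
Qed.

Lemma theta22_edges_bound m :
  all (fun p => (p.1 < m.+4) && (p.2 < m.+4)) (theta_edges 2 2 m.+1).
Proof.
have in_range : all (fun i => i < m.+4) (0 :: rcons (iota 4 m) 1).
  by rewrite /= all_rcons /=; apply/allP => i; rewrite mem_iota; lia.
rewrite /theta_edges /consec all_cat /=.
by apply: (all_zip (P := fun i => i < m.+4)) => //; case/andP: in_range.
Qed.

Definition theta22_coloring m (Lf : nat -> {set C}) (s : seq C) : bool :=
  all (fun p => nth x0 s p.1 != nth x0 s p.2) (theta_edges 2 2 m.+1) &&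
  all (fun i => nth x0 s i \in Lf i) (iota 0 m.+4).

Lemma theta22_coloring_cons m Lf c0 c1 c2 c3 r : size r = m ->
  theta22_coloring m Lf [:: c0, c1, c2, c3 & r] =
  [&& c0 \in Lf 0, c1 \in Lf 1, c2 \in Lf 2 :\ c0 :\ c1, c3 \in Lf 3 :\ c0 :\ c1
    & path_coloring x0 Lf 4 m c0 c1 r].
Proof.
move=> size_r.
have path_r : [seq nth x0 [:: c0, c1, c2, c3 & r] i | i <- iota 4 m] = r.
  by rewrite -size_r map_nth_iota /= ?drop0 ?take_size //; lia.
rewrite /theta22_coloring /theta_edges /consec all_cat /= all_zip_path map_rcons path_r /=.
rewrite /path_coloring (iotaDl 4 0) all_map !inE ![c0 == _]eq_sym andbT.
rewrite (@eq_all _ _ (fun i => nth x0 r i \in Lf (4 + i))) //.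
by do 4!case: (_ \in _); do 4!case: (_ != _); case: (path _ _ _); case: (all _ _).
Qed.

Lemma theta22_PlistE m (L : theta_V 2 2 m.+1 -> {set C}) :
  theta_Plist L =
  \sum_(c0 in L (theta_u 2 2 m.+1)) \sum_(c1 in L (theta_v 2 2 m.+1))
    #|L (inord 2) :\ c0 :\ c1| * #|L (inord 3) :\ c0 :\ c1| *
    path_count (fun i => L (inord i)) 4 m c0 c1.
Proof.
set Lf := fun i => L (inord i).
have -> : theta_u 2 2 m.+1 = inord 0 by apply: val_inj; rewrite /= inordK.
have -> : theta_v 2 2 m.+1 = inord 1 by apply: val_inj; rewrite /= inordK.
rewrite /theta_Plist /theta_proper (@card_ffun_tuple _ m.+4).
transitivity (\sum_(t : m.+4.-tuple C) theta22_coloring m Lf t).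
  apply: eq_bigr => t _.
  have tE i : [ffun i => tnth t i] i = nth x0 t i by rewrite ffunE (tnth_nth x0).
  by rewrite (forall_proper_edgesE tE (theta22_edges_bound m)) (forall_in_listsE L tE).
rewrite (sum_tuple_cons (theta22_coloring m Lf)) sum_mulb_mem; apply: eq_bigr => c0 _.
rewrite (sum_tuple_cons (fun s => theta22_coloring m Lf (c0 :: s))).
rewrite sum_mulb_mem big_distrr; apply: eq_bigr => c1 _.
rewrite (sum_tuple_cons (fun s => theta22_coloring m Lf [:: c0, c1 & s])).
under eq_bigr => c2 _ do
  rewrite (sum_tuple_cons (fun s => theta22_coloring m Lf [:: c0, c1, c2 & s])).
under eq_bigr => c2 _ do under eq_bigr => c3 _ do under eq_bigr => r _ do
  rewrite theta22_coloring_cons ?size_tuple // -2!mulnb.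
under eq_bigr => c2 _ do under eq_bigr => c3 _ do rewrite -big_distrr -big_distrr /=.
under eq_bigr => c2 _ do rewrite -big_distrr -big_distrr /=.
by rewrite -big_distrr -big_distrr /= sum3_mulb (path_countE x0).
Qed.

End ThetaDecomposition.

Lemma cardsTD2 (T : finType) (x y : T) :
  1 < #|T| -> #|[set: T] :\ x :\ y| = #|T| - 2 + (x == y).
Proof.
move=> T_gt1; have := cardsD1 x [set: T]; have := cardsD1 y ([set: T] :\ x).
rewrite cardsT !inE [y == x]eq_sym.
by case: (x == y) => /= E1 E2; move: T_gt1; rewrite E2 E1; lia.
Qed.

Lemma theta_P3E l1 l2 l3 :
  theta_P3 l1 l2 l3 = theta_Plist (fun _ : theta_V l1 l2 l3 => [set: 'I_3]).
Proof.
apply: eq_card => f; rewrite !inE.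
by rewrite (_ : [forall x, _] = true) ?andbT //; apply/forallP => x; rewrite in_setT.
Qed.

Lemma theta22_P3 j : theta_P3 2 2 (2 * j).+2 = 18 * alpha j.+1 + 12.
Proof.
have I3_gt1 : 1 < #|'I_3| by rewrite card_ord.
rewrite theta_P3E (theta22_PlistE ord0) sum_setT.
under eq_bigr => c0 _ do rewrite sum_setT.
under eq_bigr => c0 _ do under eq_bigr => c1 _ do
  rewrite !(cardsTD2 _ _ I3_gt1) card_ord path_count_I3.
under eq_bigr => c0 _ do
  rewrite (sum_eqb c0 (fun b => (3 - 2 + b) * (3 - 2 + b) * (alpha j.+1 + b))) card_ord.
rewrite big_const_ord /=; lia.
Qed.

Lemma theta22_Plist_ge (C : finType) j (L : theta_V 2 2 (2 * j).+2 -> {set C}) :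
  (forall w, #|L w| = 3) -> L (theta_u 2 2 (2 * j).+2) != L (theta_v 2 2 (2 * j).+2) ->
  21 * alpha j.+1 <= theta_Plist L.
Proof.
move=> L3 Luv.
have [x0 _] : exists x0, x0 \in L (theta_u 2 2 (2 * j).+2) by apply/card_gt0P; rewrite L3.
rewrite (theta22_PlistE x0) mulnC.
have C4_ge := four_cycle_count_ge (L3 _) (L3 _) (L3 (inord 2)) (L3 (inord 3)) Luv.
apply: leq_trans (leq_mul (leqnn (alpha j.+1)) C4_ge) _.
rewrite big_distrr; apply: leq_sum => c0 _; rewrite big_distrr /=; apply: leq_sum => c1 _.
by rewrite mulnC leq_mul2l path_count_odd_ge ?orbT.
Qed.

Lemma alpha_ge5 j : 0 < j -> 5 <= alpha j.+1.
Proof. by case: j => // j _ /=; lia. Qed.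

Theorem lemma21 (k : nat) (C : finType) (L : theta_V 2 2 (2 * k) -> {set C}) :
  2 <= k ->
  (forall w, #|L w| = 3) ->
  L (theta_u 2 2 (2 * k)) != L (theta_v 2 2 (2 * k)) ->
  theta_P3 2 2 (2 * k) <= theta_Plist L.
Proof.
move=> k_ge2; move: L; have -> : 2 * k = (2 * k.-1).+2 by lia.
move=> L L3 Luv; rewrite theta22_P3; apply: leq_trans (theta22_Plist_ge L3 Luv).
by have := @alpha_ge5 k.-1; lia.
Qed.
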